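(* Let $\mathcal{P}(3^3)$ be the graph whose vertices are the partitions of $\{1,\ldots,9\}$ into three cells each of size three, two such partitions being adjacent if and only if each cell of one partition contains exactly one point from each cell of the other. For $1\le i<j\le 9$ let $S_{i,j}$ be the set of vertices of $\mathcal{P}(3^3)$ in which $i$ and $j$ lie in the same cell. Then every independent set of size $70$ in $\mathcal{P}(3^3)$ is equal to $S_{i,j}$ for some $1\le i<j\le 9$.
   Context: Each set $S_{i,j}$ has exactly 70 elements and is an independent set of $\mathcal{P}(3^3)$; the graph $\mathcal{P}(3^3)$ has 280 vertices and is regular of valency 36. *)

From mathcomp Require Import all_boot.
Set Implicit Arguments. Unset Strict Implicit. Unset Printing Implicit Defensive.

(* Points {1,...,9} are represented by 'I_9 = {0,...,8}. *)
Definition point := 'I_9.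

Definition is_P333 (P : {set {set point}}) : bool :=
  [&& partition P [set: point], #|P| == 3 & [forall C in P, #|C| == 3]].

Definition vertex := {P : {set {set point}} | is_P333 P}.

Definition adj (P Q : vertex) : bool :=
  [forall C in val P, forall D in val Q, #|C :&: D| == 1].

Definition independent (A : {set vertex}) : bool :=
  [forall x in A, forall y in A, ~~ adj x y].

Definition Sij (i j : point) : {set vertex} :=
  [set P : vertex | [exists C in val P, (i \in C) && (j \in C)]].

From mathcomp Require Import all_boot zify.
Set Implicit Arguments. Unset Strict Implicit. Unset Printing Implicit Defensive.

(* Two partitions are adjacent exactly when no pair of points lies in a common
   cell of both.  Each of the 280 vertices lies in exactly 12 of the 840
   four-cliques and an independent set meets a clique at most once, so counting
   incidences shows that an independent set of size 70 meets every four-clique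
   exactly once.  Picking from each of 81 four-cliques that cover all vertices
   its unique element of the independent set, an exhaustive search shows that
   pairwise non-adjacent choices always have a pair {i, j} in a common cell of
   all of them.  Hence A is contained in S_{i,j}, which has at most 70
   elements. *)

Lemma sum_leq1_eq_size (I : eqType) (r : seq I) (F : I -> nat) :
  {in r, forall i, F i <= 1} -> \sum_(i <- r) F i = size r ->
  {in r, forall i, F i = 1}.
Proof.
elim: r => [|a r IHr] F_le1 //; rewrite big_cons /= => sumF i.
have F_le1r : {in r, forall i, F i <= 1} by move=> j rj; apply: F_le1; rewrite inE rj orbT.
have sum_le : \sum_(j <- r) F j <= size r.
  by rewrite -sum1_size big_seq [X in _ <= X]big_seq leq_sum.
have Fa := F_le1 a (mem_head a r).
rewrite inE => /predU1P[-> | ri]; first lia.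
by apply: IHr => //; lia.
Qed.

Section Counting.
Variable T : eqType.

Lemma count_mem_pairwise_le1 (e : rel T) (X K : seq T) :
  pairwise e K -> {in X &, forall u v, ~~ e u v} -> count (mem X) K <= 1.
Proof.
move=> + indepX; elim: K => //= a K IHK /andP[eaK eK].
case: (boolP (a \in X)) => [aX | _]; last exact: IHK.
suff -> : count (mem X) K = 0 by [].
apply/eqP; rewrite -leqn0 leqNgt -has_count; apply/hasPn => v vK; apply/negP => vX.
by move: (indepX a v aX vX); rewrite (allP eaK v vK).
Qed.

Lemma count_mem_uniqC (X K : seq T) :
  uniq X -> uniq K -> count (mem X) K = count (mem K) X.
Proof.
move=> uX uK; rewrite -!size_filter; apply/perm_size/uniq_perm; rewrite ?filter_uniq //.
by move=> v; rewrite !mem_filter andbC.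
Qed.

Lemma transversal_of_tight_count (X : seq T) (Ks : seq (seq T)) (d : nat) :
  uniq X -> all uniq Ks ->
  {in X, forall v, count (fun K => v \in K) Ks = d} ->
  {in Ks, forall K, count (mem X) K <= 1} -> d * size X = size Ks ->
  {in Ks, forall K, count (mem X) K = 1}.
Proof.
move=> uX uKs deg X_le1 sizeE; apply: sum_leq1_eq_size => //.
have incidence K : K \in Ks -> count (mem X) K = \sum_(v <- X) (v \in K).
  move=> Ks_K; rewrite count_mem_uniqC ?(allP uKs K Ks_K) // -sum1_count big_mkcond.
  by apply: eq_bigr => v _; rewrite -[mem K v]/(v \in K); case: (v \in K).
rewrite (eq_big_seq _ incidence) exchange_big /= -sizeE.
rewrite (eq_big_seq (fun _ => d)); last first.
  move=> v Xv; rewrite -(deg v Xv) -sum1_count [RHS]big_mkcond.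
  by apply: eq_bigr => K _; case: (v \in K).
by rewrite -sum1_size big_distrr; apply: eq_bigr => _ _; rewrite /= muln1.
Qed.

End Counting.

Section ChoiceSearch.
Variables (T : eqType) (r : rel T) (ok : pred (seq T)).

(* [if] rather than [==>]: the VM evaluates both arguments of [implb], which
   would defeat the pruning. *)
Fixpoint all_compatible_choices (Ks : seq (seq T)) (chosen : seq T) : bool :=
  if Ks is K :: Ks' then
    all (fun v => if all (r v) chosen then all_compatible_choices Ks' (v :: chosen) else true) K
  else ok chosen.

Lemma all_compatible_choicesP (Ks : seq (seq T)) (chosen : seq T) (g : seq T -> T) :
  all_compatible_choices Ks chosen -> {in Ks, forall K, g K \in K} ->
  {in map g Ks ++ chosen &, forall u v, r u v} -> ok (rev (map g Ks) ++ chosen).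
Proof.
elim: Ks chosen => [|K Ks IHKs] chosen //= search gK r_chosen.
have gKK : g K \in K := gK K (mem_head K Ks).
have memE : map g Ks ++ g K :: chosen =i g K :: map g Ks ++ chosen.
  by move=> u; rewrite !(inE, mem_cat) orbCA.
have compat : all (r (g K)) chosen.
  by apply/allP => w w_in; apply: r_chosen; rewrite !(inE, mem_cat) ?eqxx ?w_in ?orbT.
move/allP/(_ _ gKK): search; rewrite compat => search.
rewrite rev_cons cat_rcons; apply: IHKs => // [K' K'_in | u v].
  by apply: gK; rewrite inE K'_in orbT.
by rewrite !memE; apply: r_chosen.
Qed.

End ChoiceSearch.

Definition same_cell (P : vertex) (x y : point) : bool :=
  [exists C in val P, (x \in C) && (y \in C)].

Lemma in_Sij (i j : point) (P : vertex) : (P \in Sij i j) = same_cell P i j.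
Proof. by rewrite inE. Qed.

Lemma same_cellC (P : vertex) (x y : point) : same_cell P x y = same_cell P y x.
Proof. by apply: eq_existsb => C; rewrite [(x \in C) && _]andbC. Qed.

Lemma vertexP (P : vertex) :
  [/\ partition (val P) [set: point], #|val P| = 3
     & {in val P, forall C : {set point}, #|C| = 3}].
Proof.
case/and3P: (valP P) => partP /eqP cardP /forall_inP cardC.
by split=> // C /cardC /eqP.
Qed.

Lemma cover_vertex (P : vertex) (x : point) : x \in cover (val P).
Proof. by case: (vertexP P) => /cover_partition-> _ _; rewrite inE. Qed.

Lemma trivIset_vertex (P : vertex) : trivIset (val P).
Proof. by case: (vertexP P) => /partition_trivIset. Qed.

Lemma same_cellE (P : vertex) (x y : point) : same_cell P x y = (y \in pblock (val P) x).
Proof.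
apply/exists_inP/idP => [[C PC /andP[xC yC]] | y_in].
  by rewrite (def_pblock (trivIset_vertex P) PC xC).
by exists (pblock (val P) x); rewrite ?pblock_mem ?cover_vertex // mem_pblock cover_vertex.
Qed.

Lemma adj_of_no_common_pair (P Q : vertex) :
  (forall x y, x != y -> same_cell P x y -> ~~ same_cell Q x y) -> adj P Q.
Proof.
move=> no_common; case: (vertexP P) => _ _ cardP; case: (vertexP Q) => partQ cardQ _.
have meet_le1 C D : C \in val P -> D \in val Q -> #|C :&: D| <= 1.
  move=> PC QD; apply/card_le1_eqP => x y /setIP[xC xD] /setIP[yC yD].
  apply/eqP/contraT; rewrite eq_sym => neq_xy.
  have Pxy : same_cell P x y by apply/exists_inP; exists C; rewrite ?xC ?yC.
  have Qxy : same_cell Q x y by apply/exists_inP; exists D; rewrite ?xD ?yD.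
  by move: (no_common x y neq_xy Pxy); rewrite Qxy.
apply/forall_inP => C PC; apply/forall_inP => D QD.
rewrite eqn_leq meet_le1 // card_gt0.
apply: (partition_pigeonhole partQ) => //; last by move=> B; apply: meet_le1.
by rewrite cardQ cardP.
Qed.

Definition point_pairs : seq (nat * nat) :=
  [seq p <- [seq (i, j) | i <- iota 0 9, j <- iota 0 9] | p.1 < p.2].

Lemma mem_point_pairs (i j : nat) : ((i, j) \in point_pairs) = (i < j < 9).
Proof.
rewrite mem_filter; case: (ltnP i j) => lt_ij //.
apply/allpairsP/idP => [[[i' j'] [_ j'_9 [_ ->]]] | lt_j9].
  by move: j'_9; rewrite mem_iota /=; lia.
by exists (i, j); rewrite !mem_iota /=; split=> //; lia.
Qed.

Definition same_label (w : seq nat) (p : nat * nat) : bool := nth 0 w p.1 == nth 0 w p.2.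

(* The [let] makes the partial application [share_pair w1] compute the
   same-label pairs of [w1] once; the search below relies on this. *)
Definition share_pair (w1 : seq nat) : pred (seq nat) :=
  let pairs1 := [seq p <- point_pairs | same_label w1 p] in
  fun w2 => has (same_label w2) pairs1.

Lemma share_pairP (w1 w2 : seq nat) :
  reflect (exists2 p, p \in point_pairs & same_label w1 p && same_label w2 p)
          (share_pair w1 w2).
Proof.
apply: (iffP hasP) => [[p] | [p pairs_p /andP[w1p w2p]]].
  by rewrite mem_filter => /andP[w1p pairs_p] w2p; exists p; rewrite ?w1p.
by exists p; rewrite // mem_filter w1p.
Qed.

Fixpoint words (k n : nat) : seq (seq nat) :=
  if n is n'.+1 then [seq c :: w | c <- iota 0 k, w <- words k n'] else [:: [::]].

Lemma mem_words (k : nat) (w : seq nat) : all (gtn k) w -> w \in words k (size w).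
Proof.
elim: w => //= c w IHw /andP[lt_ck kw].
by apply: (allpairs_f (fun c w => c :: w)); rewrite ?mem_iota ?IHw.
Qed.

Definition canonical_labelling (w : seq nat) : seq nat := [seq index c (undup w) | c <- w].

Lemma canonical_labelling_eq (w : seq nat) (i j : nat) : i < size w -> j < size w ->
  (nth 0 (canonical_labelling w) i == nth 0 (canonical_labelling w) j) =
  (nth 0 w i == nth 0 w j).
Proof.
move=> lt_iw lt_jw; rewrite !(nth_map 0) //.
by rewrite (inj_in_eq (@index_inj _ 0 (undup w))) ?mem_undup ?mem_nth.
Qed.

Definition balanced_words : seq (seq nat) :=
  [seq w <- words 3 9 | all (fun c => count_mem c w == 3) (iota 0 3)].

Definition vertex_codes : seq (seq nat) := undup (map canonical_labelling balanced_words).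

Definition cell_label (P : vertex) (x : point) : nat := index (pblock (val P) x) (enum (val P)).

Definition code (P : vertex) : seq nat :=
  canonical_labelling [seq cell_label P x | x <- enum 'I_9].

Lemma cell_label_eq (P : vertex) (x y : point) :
  (cell_label P x == cell_label P y) = same_cell P x y.
Proof.
rewrite /cell_label (inj_in_eq (@index_inj _ set0 (enum (val P))));
  rewrite ?mem_enum ?pblock_mem ?cover_vertex //.
by rewrite eq_pblock ?trivIset_vertex ?cover_vertex // -same_cellE.
Qed.

Lemma same_label_code (P : vertex) (x y : point) :
  same_label (code P) (x : nat, y : nat) = same_cell P x y.
Proof.
change ((nth 0 (code P) x == nth 0 (code P) y) = same_cell P x y).
rewrite /code canonical_labelling_eq ?size_map -?enumT ?size_enum_ord //.
by rewrite !(nth_map x) -?enumT ?size_enum_ord // !nth_ord_enum cell_label_eq.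
Qed.

Lemma code_inj : injective code.
Proof.
move=> P Q eq_code; apply: val_inj.
case: (vertexP P) => partP _ _; case: (vertexP Q) => partQ _ _.
rewrite -(equivalence_partition_pblock partP) -(equivalence_partition_pblock partQ).
apply: eq_imset => x; apply/setP => y.
by rewrite !inE -!same_cellE -!same_label_code eq_code.
Qed.

Lemma cell_label_lt (P : vertex) (x : point) : cell_label P x < 3.
Proof.
case: (vertexP P) => _ cardP _.
by rewrite /cell_label -[X in _ < X]cardP cardE index_mem mem_enum pblock_mem ?cover_vertex.
Qed.

Lemma count_cell_label (P : vertex) (k : nat) :
  k < 3 -> count (fun x => cell_label P x == k) (enum 'I_9) = 3.
Proof.
case: (vertexP P) => _ cardP cardC lt_k3.
have lt_k : k < size (enum (val P)) by rewrite -cardE cardP.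
set C := nth set0 (enum (val P)) k.
have PC : C \in val P by rewrite -mem_enum mem_nth.
rewrite -[RHS](cardC C PC) cardE size_filter -enumT; apply: eq_count => x /=.
apply/eqP/idP => [label_x | xC].
  rewrite /C -label_x /cell_label nth_index ?mem_pblock ?cover_vertex //.
  by rewrite mem_enum pblock_mem ?cover_vertex.
by rewrite /cell_label (def_pblock (trivIset_vertex P) PC xC) /C index_uniq ?enum_uniq.
Qed.

Lemma code_in_vertex_codes (P : vertex) : code P \in vertex_codes.
Proof.
rewrite /vertex_codes /code mem_undup; apply: map_f; rewrite mem_filter; apply/andP; split.
  apply/allP => k; rewrite mem_iota => /andP[_ lt_k3].
  by rewrite count_map count_cell_label.
have := @mem_words 3 [seq cell_label P x | x <- enum 'I_9].
rewrite size_map size_enum_ord; apply.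
by apply/allP => _ /mapP[x _ ->]; apply: cell_label_lt.
Qed.

Definition adjacent_codes (w1 w2 : seq nat) : bool := ~~ share_pair w1 w2.

Lemma adj_of_no_share (P Q : vertex) : adjacent_codes (code P) (code Q) -> adj P Q.
Proof.
move=> no_share; apply: adj_of_no_common_pair => x y neq_xy Pxy; apply/negP => Qxy.
move/share_pairP: no_share; apply.
wlog lt_xy : x y {neq_xy} Pxy Qxy / x < y.
  move=> lt_case; case: (ltngtP x y) neq_xy => [lt_xy _ | lt_yx _ | /val_inj->]; last by rewrite eqxx.
  - exact: (lt_case x y).
  - by rewrite same_cellC (same_cellC Q) in Pxy Qxy; exact: (lt_case y x).
by exists (val x, val y); rewrite ?mem_point_pairs ?lt_xy ?ltn_ord // !same_label_code Pxy Qxy.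
Qed.

Fixpoint cliques (T : Type) (e : rel T) (k : nat) (s : seq T) : seq (seq T) :=
  if k is k'.+1 then
    (fix extend s := if s is v :: s' then
        [seq v :: K | K <- cliques e k' [seq w <- s' | e v w]] ++ extend s'
      else [::]) s
  else [:: [::]].

Definition four_cliques : seq (seq (seq nat)) :=
  Eval vm_compute in cliques adjacent_codes 4 vertex_codes.

Lemma four_cliquesP : {in four_cliques, forall K, uniq K && pairwise adjacent_codes K}.
Proof. by apply/allP; vm_compute. Qed.

Lemma size_four_cliques : size four_cliques = 840.
Proof. by vm_compute. Qed.

Lemma four_cliques_degree :
  {in vertex_codes, forall w, count (fun K => w \in K) four_cliques == 12}.
Proof. by apply/allP; vm_compute. Qed.

(* Positions in [four_cliques] of 81 cliques covering all vertices, found by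
   an external search. *)
Definition covering_cliques : seq (seq (seq nat)) :=
  [seq nth [::] four_cliques k | k <- [::
    544; 695; 668; 833; 268; 367; 518; 319; 257; 205; 463; 25; 337; 529; 94;
    754; 682; 563; 708; 594; 482; 183; 248; 101; 353; 437; 738; 731; 639;
    626; 447; 818; 75; 497; 412; 723; 814; 46; 303; 114; 48; 677; 376; 327;
    749; 712; 790; 774; 397; 173; 146; 6; 164; 88; 342; 310; 129; 203; 446;
    372; 828; 419; 577; 92; 237; 68; 133; 449; 299; 573; 435; 611; 223; 22;
    495; 761; 278; 522; 358; 838; 465]].

Lemma covering_cliques_sub : {subset covering_cliques <= four_cliques}.
Proof. by apply/allP; vm_compute. Qed.

Lemma covering_cliques_cover :
  {in vertex_codes, forall w, has (fun K => w \in K) covering_cliques}.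
Proof. by apply/allP; vm_compute. Qed.

Definition common_pair (s : seq (seq nat)) : bool :=
  has (fun p => all (same_label^~ p) s) point_pairs.

Lemma covering_cliques_search :
  all_compatible_choices share_pair common_pair covering_cliques [::].
Proof. by vm_compute. Qed.

Lemma count_same_label :
  {in point_pairs, forall p, count (same_label^~ p) vertex_codes == 70}.
Proof. by apply/allP; vm_compute. Qed.

Lemma card_Sij_le (i j : point) : i < j -> #|Sij i j| <= 70.
Proof.
move=> lt_ij; have pairs_ij : (val i, val j) \in point_pairs.
  by rewrite mem_point_pairs lt_ij ltn_ord.
rewrite -(eqP (count_same_label pairs_ij)) -size_filter cardE -(size_map code).
apply: uniq_leq_size; first by rewrite (map_inj_uniq code_inj) enum_uniq.
move=> _ /mapP[P + ->]; rewrite mem_enum in_Sij => ijP.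
by rewrite mem_filter /= same_label_code ijP code_in_vertex_codes.
Qed.

Lemma independent_codes_common_pair (X : seq (seq nat)) :
  uniq X -> {subset X <= vertex_codes} -> {in X &, forall u w, share_pair u w} ->
  size X = 70 -> exists2 p, p \in point_pairs & {in X, forall w, same_label w p}.
Proof.
move=> uX X_codes X_share sizeX.
have meet_once : {in four_cliques, forall K, count (mem X) K = 1}.
  apply: (@transversal_of_tight_count _ X four_cliques 12 uX).
  - by apply/allP => K /four_cliquesP /andP[].
  - by move=> w /X_codes /four_cliques_degree /eqP.
  - move=> K /four_cliquesP /andP[_ clique_K].
    by apply: count_mem_pairwise_le1 clique_K _ => u w Xu Xw; rewrite negbK X_share.
  - by rewrite sizeX size_four_cliques.
pose g K := head [::] [seq w <- K | w \in X].
have in_X_g K : K \in covering_cliques -> [seq w <- K | w \in X] = [:: g K].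
  move=> /covering_cliques_sub /meet_once; rewrite -size_filter /g.
  by case: [seq w <- K | w \in X] => [|w []].
have g_mem K : K \in covering_cliques -> g K \in K /\ g K \in X.
  by move=> /in_X_g gK; have := mem_head (g K) [::]; rewrite -gK mem_filter => /andP[].
have /hasP[p pairs_p /allP common_p] : common_pair (rev (map g covering_cliques) ++ [::]).
  apply: all_compatible_choicesP covering_cliques_search _ _ => [K /g_mem[] //|u w].
  by rewrite cats0 => /mapP[K /g_mem[_ Xu] ->] /mapP[K' /g_mem[_ Xw] ->]; apply: X_share.
exists p => // w Xw; apply: common_p.
have /hasP[K cover_K Kw] := covering_cliques_cover (X_codes w Xw).
have : w \in [:: g K] by rewrite -in_X_g // mem_filter Xw.
by rewrite inE cats0 mem_rev => /eqP ->; apply: map_f.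
Qed.

Theorem mainTheorem2 (A : {set vertex}) :
  independent A -> #|A| = 70 ->
  exists i j : point, (i < j)%N /\ A = Sij i j.
Proof.
move=> indepA cardA; set X := map code (enum A).
have uX : uniq X by rewrite (map_inj_uniq code_inj) enum_uniq.
have X_codes : {subset X <= vertex_codes} by move=> _ /mapP[P _ ->]; apply: code_in_vertex_codes.
have X_share : {in X &, forall u w, share_pair u w}.
  move=> _ _ /mapP[P + ->] /mapP[Q + ->]; rewrite !mem_enum => AP AQ.
  apply: contraR (@adj_of_no_share P Q) _.
  by move/forall_inP/(_ P AP)/forall_inP/(_ Q AQ): indepA.
have sizeX : size X = 70 by rewrite size_map -cardE.
have [[i j]] := independent_codes_common_pair uX X_codes X_share sizeX.
rewrite mem_point_pairs => /andP[lt_ij lt_j9] common_ij.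
have lt_i9 := ltn_trans lt_ij lt_j9.
exists (Ordinal lt_i9), (Ordinal lt_j9); split=> //.
have sub : A \subset Sij (Ordinal lt_i9) (Ordinal lt_j9).
  by apply/subsetP => P AP; rewrite in_Sij -same_label_code common_ij // map_f ?mem_enum.
by apply/eqP; rewrite eqEcard sub cardA card_Sij_le.
Qed.
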